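(* Let $a<b$, let $g:[a,b]\to[0,\infty)$ be increasing and left-continuous, and let $f\in BV([a,b])\cap\mathcal L^1_g([a,b))$. Assume $g^C$ is $p$-$H$-Hölder on $[a,b]$, i.e. $|g^C(x)-g^C(y)|\le H|x-y|^p$ for all $x,y\in[a,b]$, with $H>0$, $p\in(0,1]$. Then $$\Big| f(a)(g^C(b)-g^C(a))+\sum_{s\in[a,b)} f(s)\Delta^+g(s)-\int_{[a,b)} f\,\mathrm d\mu_g\Big|\le H(b-a)^p\,\mathrm{Var}_a^b f$$ and $$\Big| \tfrac{f(a)+f(b)}{2}(g^C(b)-g^C(a))+\sum_{s\in[a,b)} f(s)\Delta^+g(s)-\int_{[a,b)} f\,\mathrm d\mu_g\Big|\le H\Big(\tfrac{b-a}{2}\Big)^p\mathrm{Var}_a^b f.$$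
   Context: For an increasing left-continuous $g:[a,b]\to\mathbb R$, $\mu_g$ is the Lebesgue–Stieltjes measure on $[a,b)$ with $\mu_g([c,d))=g(d)-g(c)$, and $\mathcal L^1_g([a,b))$ the space of $\mu_g$-integrable functions. $\Delta^+\varphi(t)=\varphi(t^+)-\varphi(t)$. The jump part of $g$ is $g^B(t)=\sum_{s\in[a,t)}\Delta^+g(s)$ and its continuous part is $g^C=g-g^B$. $\mathrm{Var}_a^b f$ is the total variation of $f$ on $[a,b]$. *)

From HB Require Import structures.
From mathcomp Require Import all_boot all_order all_algebra.
From mathcomp Require Import all_classical all_reals all_analysis.
Set Implicit Arguments. Unset Strict Implicit. Unset Printing Implicit Defensive.
Import Order.TTheory GRing.Theory Num.Theory.
Import numFieldNormedType.Exports.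
Local Open Scope classical_set_scope.
Local Open Scope ring_scope.

Definition rjump (R : realType) (g : R -> R) (t : R) : R :=
  lim (g x @[x --> t^'+]) - g t.

Definition jumpPart (R : realType) (g : R -> R) (a t : R) : R :=
  fine (\esum_(s in `[a, t[) (rjump g s)%:E)%E.

Definition contPart (R : realType) (g : R -> R) (a t : R) : R :=
  g t - jumpPart g a t.

(* sum of an absolutely summable real family over D: positive minus negative part *)
Definition ssum (R : realType) (D : set R) (F : R -> R) : \bar R :=
  (\esum_(s in D) ((EFin \o F)^\+ s) - \esum_(s in D) ((EFin \o F)^\- s))%E.

From HB Require Import structures.
From mathcomp Require Import all_boot all_order all_algebra.
From mathcomp Require Import all_classical all_reals all_analysis.
From mathcomp Require Import measurable_realfun ring lra.
Set Implicit Arguments.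
Unset Strict Implicit.
Unset Printing Implicit Defensive.
Import Order.TTheory GRing.Theory Num.Theory.
Import numFieldNormedType.Exports.
Local Open Scope classical_set_scope.
Local Open Scope ring_scope.

(* On [a, b) the measure mu is the sum of its atoms, which sit at the right
   jumps of g (mu [set s] = rjump g s, by continuity from above), and of a
   diffuse part of total mass g^C(b) - g^C(a).  So the quantity to be bounded
   is the integral of c - f against the diffuse part, with c = f(a), resp.
   c = (f(a) + f(b))/2; on [a, b) we have |f - c| <= Var f, resp. Var f / 2,
   the Hoelder condition at the endpoints gives g^C(b) - g^C(a) <= H (b - a)^p,
   and (1/2)^p >= 1/2.  The diffuse part is never constructed: the sum of a
   nonnegative function against the atoms is at most its integral, and this
   applied to f - (c - W) and (c + W) - f yields the two one-sided bounds. *)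

Lemma esum_le_integral_atoms (R : realType) (mu : {measure set R -> \bar R})
    (D : set R) (phi w : R -> R) :
  measurable D -> (forall s, D s -> 0 <= phi s) -> measurable_fun D phi ->
  (forall s, D s -> ((w s)%:E <= mu [set s])%E) ->
  (\esum_(s in D) (phi s * w s)%:E <= \int[mu]_(x in D) (phi x)%:E)%E.
Proof.
move=> mD phi0 /measurable_EFinP mphi w_le.
apply: ge_ereal_sup => _ [X [finX XD] <-].
have mX : measurable X.
  by apply: countable_measurable; [exact: measurable_set1|exact: finite_set_countable].
apply: le_trans (ge0_subset_integral mu mX mD mphi _ XD); last first.
  by move=> x Dx; rewrite lee_fin phi0.
have XE : X = \big[setU/set0]_(i <- finmap.enum_fset (fset_set X)) [set i].
  rewrite bigsetU_fset_set//; apply/seteqP; split => [x Xx|x [y Xy ->]//].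
  by exists x.
rewrite [in leRHS]XE ge0_integral_bigsetU//; first last.
- by rewrite -XE => x Xx; rewrite lee_fin phi0//; exact: XD.
- by rewrite -XE; exact: measurable_funS mphi.
- by move=> i j _ _ [x [/= -> ->]].
rewrite -fsbig_finite//; apply: lee_fsum => // x Xx.
rewrite (@eq_integral _ _ _ mu _ (fun=> (phi x)%:E)); last by move=> y /[!inE] ->.
rewrite integral_cst// EFinM lee_wpmul2l// ?lee_fin ?phi0 ?w_le//; exact: XD.
Qed.

Lemma integrable_cst_finite (R : realType) (mu : {measure set R -> \bar R})
    (D : set R) (k : R) :
  measurable D -> (mu D < +oo)%E -> mu.-integrable D (EFin \o cst k).
Proof.
move=> mD muD; apply/integrableP; split; first exact/measurable_EFinP.
rewrite (@eq_integral _ _ _ mu _ (cst `|k|%:E)); last by move=> x _ /=.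
by rewrite integral_cst// lte_mul_pinfty.
Qed.

Lemma contPart_at_base (R : realType) (g : R -> R) (a : R) : contPart g a a = g a.
Proof. by rewrite /contPart /jumpPart set_itvco0 esum_set0 subr0. Qed.

Lemma bigcap_itvco_cvg (R : realType) (s : R) (u : nat -> R) :
  (forall n, s < u n) -> u n @[n --> \oo] --> s ->
  \bigcap_n `[s, u n[%classic = [set s].
Proof.
move=> su ucvg; apply/seteqP; split => [x /= Hx|x /= ->{x} n _]; last first.
  by rewrite /= in_itv/= lexx su.
have /andP[sx _] : s <= x < u 0 by move: (Hx 0%N I); rewrite /= in_itv.
apply/eqP; rewrite eq_le sx andbT leNgt; apply/negP => xs.
have [N _ HN] := cvgr_lt s ucvg x xs.
have := Hx N I; rewrite /= in_itv/= => /andP[_].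
by rewrite ltNge (ltW (HN N (leqnn N))).
Qed.

Lemma esumZl (R : realType) (T : choiceType) (D : set T) (k : R) (w : T -> \bar R) :
  0 <= k -> (forall s, D s -> (0 <= w s)%E) ->
  (\esum_(s in D) (k%:E * w s) = k%:E * \esum_(s in D) w s)%E.
Proof.
move=> k0 w0.
have sumZ X : fsets D X -> (k%:E * \sum_(i \in X) w i = \sum_(i \in X) (k%:E * w i))%E.
  move=> [finX XD]; rewrite !fsbig_finite// big_seq_cond ge0_sume_distrr.
    by rewrite -big_seq_cond.
  by move=> i /andP[+ _]; rewrite in_fset_set// inE => /XD/w0.
rewrite /esum -ereal_supZl//; last first.
  by apply/set0P; exists 0%E; exists set0; [exact: fsets_set0|rewrite fsbig_set0].
congr ereal_sup; apply/seteqP; split => [_ [X DX <-]|_ [_ [X DX <-] <-]].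
  by exists (\sum_(i \in X) w i)%E; [exists X|rewrite sumZ].
by exists X => //; rewrite sumZ.
Qed.

Section jump_sum.
Variables (R : realType) (a b : R) (g : R -> R) (mu : {measure set R -> \bar R}).
Hypothesis ab : a <= b.
Hypothesis g_nd : {in `[a, b] &, {homo g : x y / x <= y}}.
Hypothesis mu_itv : forall c d, a <= c -> c <= d -> d <= b ->
  mu `[c, d[%classic = (g d - g c)%:E.

Local Notation D := `[a, b[%classic.

Lemma cvg_at_right_rjump s : a <= s -> s < b ->
  g x @[x --> s^'+] --> lim (g x @[x --> s^'+]).
Proof.
move=> aS sb; apply: cvgP.
have in_ab x : s <= x -> x <= b -> x \in `[a, b].
  by move=> sx xb; rewrite in_itv/= (le_trans aS sx) xb.
apply: (@nondecreasing_at_right_cvgr R g s (BLeft b)); first by rewrite bnd_simp.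
- move=> x y; rewrite !in_itv/= => /andP[sx xb] /andP[sy yb].
  by apply: g_nd; apply: in_ab; rewrite ltW.
- exists (g s) => _ [x /= + <-]; rewrite in_itv/= => /andP[sx xb].
  by apply: g_nd; [exact: in_ab (lexx s) (ltW sb)|exact: in_ab (ltW sx) (ltW xb)|exact: ltW].
Qed.

Lemma measure_set1_rjump s : a <= s -> s < b -> mu [set s] = (rjump g s)%:E.
Proof.
move=> aS sb.
pose u n : R := s + (b - s) / n.+1%:R.
have bs0 : 0 < b - s by rewrite subr_gt0.
have su n : s < u n by rewrite /u ltrDl divr_gt0.
have ub n : u n <= b.
  by rewrite /u -lerBrDl ler_pdivrMr// ler_peMr ?(ltW bs0)// ler1n.
have ucvg : u n @[n --> \oo] --> s.
  rewrite -[X in _ --> X]addr0; apply: cvgD; first exact: cvg_cst.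
  rewrite -(mulr0 (b - s)); apply: cvgM; first exact: cvg_cst.
  exact: cvg_harmonic.
have mu_u n : mu `[s, u n[%classic = (g (u n) - g s)%:E.
  by apply: mu_itv => //; exact: ltW.
have mu_cap : (mu \o (fun n => `[s, u n[%classic)) n @[n --> \oo] --> mu [set s].
  rewrite -(bigcap_itvco_cvg su ucvg); apply: nonincreasing_cvg_mu.
  - by rewrite mu_u ltry.
  - by move=> n; exact: measurable_itv.
  - by rewrite (bigcap_itvco_cvg su ucvg); exact: measurable_set1.
  - move=> n m nm; rewrite subsetEset => x /=; rewrite !in_itv/= => /andP[-> xu] /=.
    apply: (lt_le_trans xu); rewrite /u lerD2l ler_pM2l//.
    by rewrite lef_pV2 ?posrE ?ltr0n// ler_nat ltnS.
have mu_jump : (mu \o (fun n => `[s, u n[%classic)) n @[n --> \oo] --> (rjump g s)%:E.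
  apply: cvg_EFin; first by apply: nearW => n /=; rewrite mu_u.
  have -> : fine \o (mu \o (fun n => `[s, u n[%classic)) = fun n => g (u n) - g s.
    by apply/funext => n /=; rewrite mu_u.
  apply: cvgB; last exact: cvg_cst.
  by move/cvg_at_rightP : (cvg_at_right_rjump aS sb); apply; split.
exact: cvg_unique mu_cap mu_jump.
Qed.

Lemma rjump_ge0 s : D s -> 0 <= rjump g s.
Proof.
by rewrite /= in_itv/= => /andP[aS sb]; rewrite -lee_fin -measure_set1_rjump.
Qed.

Definition jump_sum (phi : R -> R) : \bar R := \esum_(s in D) (phi s * rjump g s)%:E.

Lemma jump_sum_le_integral (phi : R -> R) : (forall s, D s -> 0 <= phi s) ->
  measurable_fun D phi -> (jump_sum phi <= \int[mu]_(x in D) (phi x)%:E)%E.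
Proof.
move=> phi0 mphi; apply: esum_le_integral_atoms => // s.
by rewrite /= in_itv/= => /andP[aS sb]; rewrite measure_set1_rjump.
Qed.

Lemma jump_sum_fin_num (phi : R -> R) : (forall s, D s -> 0 <= phi s) ->
  mu.-integrable D (EFin \o phi) -> jump_sum phi \is a fin_num.
Proof.
move=> phi0 iphi; rewrite ge0_fin_numE; last first.
  by apply: esum_ge0 => s Ds; rewrite lee_fin mulr_ge0 ?phi0 ?rjump_ge0.
apply: le_lt_trans (jump_sum_le_integral phi0 _) _.
  by apply/measurable_EFinP; exact: measurable_int iphi.
by rewrite -ge0_fin_numE ?integrable_fin_num//; apply: integral_ge0 => x /phi0.
Qed.

Lemma jump_sum_le_Rintegral (phi : R -> R) : (forall s, D s -> 0 <= phi s) ->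
  mu.-integrable D (EFin \o phi) -> fine (jump_sum phi) <= \int[mu]_(x in D) phi x.
Proof.
move=> phi0 iphi; rewrite /Rintegral fine_le ?jump_sum_fin_num ?integrable_fin_num//.
apply: jump_sum_le_integral => //.
by apply/measurable_EFinP; exact: measurable_int iphi.
Qed.

Lemma integrable_cst_itv k : mu.-integrable D (EFin \o cst k).
Proof.
by apply: integrable_cst_finite; rewrite ?mu_itv ?ltry//; exact: measurable_itv.
Qed.

Lemma jump_sum_cst k : 0 <= k -> jump_sum (cst k) = (k * jumpPart g a b)%:E.
Proof.
have J_fin : \esum_(s in D) (rjump g s)%:E \is a fin_num.
  rewrite (eq_esum (b := fun s => (cst 1 s * rjump g s)%:E)) => [|s _]; last first.
    by rewrite mul1r.
  by apply: jump_sum_fin_num => [s _|]; [exact: ler01|exact: integrable_cst_itv].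
move=> k0; rewrite /jump_sum /jumpPart EFinM fineK//.
under eq_esum do rewrite EFinM.
by rewrite esumZl// => s Ds; rewrite lee_fin rjump_ge0.
Qed.

Lemma jump_sumD (phi psi : R -> R) : (forall s, D s -> 0 <= phi s) ->
  (forall s, D s -> 0 <= psi s) ->
  jump_sum (fun s => phi s + psi s) = (jump_sum phi + jump_sum psi)%E.
Proof.
move=> phi0 psi0; rewrite /jump_sum -esumD => [|s Ds|s Ds]; last 2 first.
- by rewrite lee_fin mulr_ge0 ?phi0 ?rjump_ge0.
- by rewrite lee_fin mulr_ge0 ?psi0 ?rjump_ge0.
by apply: eq_esum => s _; rewrite mulrDl EFinD.
Qed.

Lemma ssum_jump_shift (f : R -> R) k : 0 <= k -> (forall s, D s -> 0 <= f s + k) ->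
  mu.-integrable D (EFin \o f) ->
  ssum D (fun s => f s * rjump g s) =
    (fine (jump_sum (fun s => f s + k)) - k * jumpPart g a b)%:E.
Proof.
move=> k0 fk0 fi.
have fki : mu.-integrable D (EFin \o (fun s => f s + k)).
  exact: (integrableD _ fi (integrable_cst_itv k)).
have summable_jump (phi : R -> R) : (forall s, D s -> 0 <= phi s) ->
    mu.-integrable D (EFin \o phi) -> summable D (fun s => (phi s * rjump g s)%:E).
  move=> phi0 iphi; rewrite /summable.
  rewrite (eq_esum (b := fun s => (phi s * rjump g s)%:E)) => [|s Ds].
    by rewrite ltey_eq jump_sum_fin_num.
  by rewrite gee0_abs// lee_fin mulr_ge0 ?phi0 ?rjump_ge0.
rewrite /ssum.
have -> : EFin \o (fun s => f s * rjump g s) = ((fun s => ((f s + k) * rjump g s)%:E)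
    \- (fun s => (cst k s * rjump g s)%:E))%E.
  by apply/funext => s /=; rewrite -EFinB mulrDl addrK.
rewrite esumB => [|||s Ds|s Ds].
- by rewrite -/(jump_sum _) -/(jump_sum _) jump_sum_cst// EFinB fineK ?jump_sum_fin_num.
- exact: (summable_jump (fun s => f s + k) fk0 fki).
- exact: (summable_jump (cst k) (fun _ _ => k0) (integrable_cst_itv k)).
- by rewrite lee_fin mulr_ge0 ?fk0 ?rjump_ge0.
- by rewrite lee_fin mulr_ge0 ?rjump_ge0.
Qed.

Lemma fine_jump_sumD (phi psi : R -> R) :
  (forall s, D s -> 0 <= phi s) -> (forall s, D s -> 0 <= psi s) ->
  mu.-integrable D (EFin \o phi) -> mu.-integrable D (EFin \o psi) ->
  fine (jump_sum (fun s => phi s + psi s)) = fine (jump_sum phi) + fine (jump_sum psi).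
Proof.
by move=> phi0 psi0 iphi ipsi; rewrite jump_sumD// fineD// jump_sum_fin_num.
Qed.

Lemma Rintegral_itv_cst k : \int[mu]_(x in D) k = k * (g b - g a).
Proof. by rewrite Rintegral_cst ?mu_itv//; exact: measurable_itv. Qed.

Lemma jump_sum_addr_le (f : R -> R) k : mu.-integrable D (EFin \o f) ->
  (forall s, D s -> 0 <= f s + k) ->
  fine (jump_sum (fun s => f s + k)) <= \int[mu]_(x in D) f x + k * (g b - g a).
Proof.
move=> fi fk0; have mD : measurable D by exact: measurable_itv.
rewrite -Rintegral_itv_cst -RintegralD//; last exact: integrable_cst_itv.
by apply: jump_sum_le_Rintegral => //; exact: (integrableD _ fi (integrable_cst_itv k)).
Qed.

Lemma jump_sum_subr_le (f : R -> R) k : mu.-integrable D (EFin \o f) ->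
  (forall s, D s -> 0 <= k - f s) ->
  fine (jump_sum (fun s => k - f s)) <= k * (g b - g a) - \int[mu]_(x in D) f x.
Proof.
move=> fi kf0; have mD : measurable D by exact: measurable_itv.
rewrite -Rintegral_itv_cst -RintegralB//; last exact: integrable_cst_itv.
by apply: jump_sum_le_Rintegral => //; exact: (integrableB _ (integrable_cst_itv k) fi).
Qed.

Lemma abse_integral_jump_approx_le (f : R -> R) (c W : R) :
  mu.-integrable D (EFin \o f) -> (forall x, D x -> `|f x - c| <= W) ->
  (`| (c * (contPart g a b - contPart g a a))%:E
        + ssum D (fun s => (f s * rjump g s)%R) - \int[mu]_(x in D) (f x)%:E |
     <= (W * (contPart g a b - contPart g a a))%:E)%E.
Proof.
move=> fi fcW.
have fbnd x : D x -> c - W <= f x <= c + W.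
  by move=> /fcW; rewrite ler_norml => /andP[? ?]; apply/andP; split; lra.
have icst := integrable_cst_itv.
have ifk (k : R) : mu.-integrable D (EFin \o (fun x => f x + k)).
  exact: (integrableD _ fi (icst k)).
have ikf (k : R) : mu.-integrable D (EFin \o (fun x => k - f x)).
  exact: (integrableB _ (icst k) fi).
set I := \int[mu]_(x in D) f x.
set J := jumpPart g a b.
have fine_cst k : 0 <= k -> fine (jump_sum (cst k)) = k * J.
  by move=> k0; rewrite jump_sum_cst.
(* Shifting by B makes ssum, a difference of two esums, a single jump_sum. *)
set B := `|c| + `|W|.
have normc := ler_norm (- c); rewrite normrN in normc.
have normW := ler_norm W.
have normNW := ler_norm (- W); rewrite normrN in normNW.
have B0 : 0 <= B by rewrite addr_ge0.
have fB s : D s -> 0 <= f s + B by move=> /fbnd /andP[? ?]; rewrite /B; lra.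
have f_lo s : D s -> 0 <= f s + (W - c) by move=> /fbnd /andP[? ?]; lra.
have f_hi s : D s -> 0 <= (c + W) - f s by move=> /fbnd /andP[? ?]; lra.
have lo_le := jump_sum_addr_le fi f_lo.
have hi_le := jump_sum_subr_le fi f_hi.
rewrite -/I in lo_le hi_le.
have lo_shift : fine (jump_sum (fun s => f s + B)) =
    fine (jump_sum (fun s => f s + (W - c))) + (B - (W - c)) * J.
  rewrite -fine_cst; last by rewrite /B; lra.
  rewrite -(fine_jump_sumD f_lo _ (ifk _) (icst _)); last by move=> s _ /=; rewrite /B; lra.
  by congr (fine (jump_sum _)); apply/funext => s /=; ring.
have hi_shift : fine (jump_sum (fun s => (c + W) - f s)) + fine (jump_sum (fun s => f s + B))
    = (c + W + B) * J.
  rewrite -fine_cst; last by rewrite /B; lra.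
  rewrite -(fine_jump_sumD f_hi fB (ikf _) (ifk _)).
  by congr (fine (jump_sum _)); apply/funext => s /=; ring.
rewrite (ssum_jump_shift B0 fB fi) contPart_at_base /contPart -/J.
have IE : (\int[mu]_(x in D) (f x)%:E = I%:E)%E.
  by rewrite fineK// integrable_fin_num//; exact: measurable_itv.
rewrite IE -EFinD abse_EFin lee_fin ler_norml.
apply/andP; split; nra.
Qed.

End jump_sum.

Lemma total_variation_split_le (R : realType) (a b x : R) (f : R -> R) :
  a <= x -> x <= b ->
  ((`|f x - f a| + `|f b - f x|)%:E <= total_variation a b f)%E.
Proof.
by move=> ax xb; rewrite (total_variationD f ax xb) EFinD leeD ?total_variation_ge.
Qed.

Lemma midpoint_deviation_le (R : realFieldType) (u v w V : R) :
  `|w - u| + `|v - w| <= V -> `|w - (u + v) / 2| <= V / 2.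
Proof.
move=> uvV; have := ler_norm (w - u); have := ler_norm (v - w).
have := ler_norm (- (w - u)); have := ler_norm (- (v - w)).
by rewrite !normrN ler_norml => *; apply/andP; split; lra.
Qed.

Lemma half_le_half_powR (R : realType) (p : R) : p <= 1 -> 2^-1 <= (2^-1 : R) `^ p.
Proof.
by move=> p1; apply: ger1_powR => //; rewrite invr_gt0 ltr0n /= invf_le1 ?ler1n.
Qed.

Theorem mainTheorem2 (R : realType) (a b H p : R) (g f : R -> R)
  (mu : {measure set R -> \bar R}) :
  a < b ->
  {in `[a, b] &, {homo g : x y / x <= y}} ->
  (forall t, t \in `[a, b] -> 0 <= g t) ->
  (forall t, t \in `]a, b] -> g x @[x --> t^'-] --> g t) ->
  (forall c d, a <= c -> c <= d -> d <= b -> mu `[c, d[%classic = (g d - g c)%:E) ->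
  bounded_variation a b f ->
  mu.-integrable `[a, b[%classic (EFin \o f) ->
  0 < H -> 0 < p -> p <= 1 ->
  (forall x y, x \in `[a, b] -> y \in `[a, b] ->
     `|contPart g a x - contPart g a y| <= H * `|x - y| `^ p) ->
  (`| (f a * (contPart g a b - contPart g a a))%:E
        + ssum `[a, b[ (fun s => (f s * rjump g s)%R)
        - \int[mu]_(x in `[a, b[) (f x)%:E |
     <= (H * (b - a) `^ p)%:E * total_variation a b f)%E /\
  (`| ((f a + f b) / 2 * (contPart g a b - contPart g a a))%:E
        + ssum `[a, b[ (fun s => (f s * rjump g s)%R)
        - \int[mu]_(x in `[a, b[) (f x)%:E |
     <= (H * ((b - a) / 2) `^ p)%:E * total_variation a b f)%E.
Proof.
move=> ab g_nd _ _ mu_itv bvf fi H0 _ p1 hold.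
have TV_fin : total_variation a b f \is a fin_num.
  by apply/bounded_variationP => //; exact: ltW.
set V := fine (total_variation a b f).
have TVE : total_variation a b f = V%:E by rewrite fineK.
have V0 : 0 <= V by rewrite -lee_fin -TVE total_variation_ge0// ltW.
have dev x : `[a, b[%classic x -> `|f x - f a| + `|f b - f x| <= V.
  by rewrite /= in_itv/= => /andP[ax xb]; rewrite -lee_fin -TVE total_variation_split_le// ltW.
set M := contPart g a b - contPart g a a.
have MH : M <= H * (b - a) `^ p.
  have := hold b a; rewrite !in_itv/= (ltW ab) !lexx (@gtr0_norm _ (b - a)) ?subr_gt0//.
  by move=> /(_ isT isT); apply: le_trans; exact: ler_norm.
have approx := abse_integral_jump_approx_le (ltW ab) g_nd mu_itv fi.
have HP0 : 0 <= H * (b - a) `^ p by rewrite mulr_ge0 ?powR_ge0 ?ltW.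
rewrite TVE -!EFinM; split.
- apply: le_trans (approx (f a) V _) _.
    by move=> x /dev; have := normr_ge0 (f b - f x); lra.
  by rewrite lee_fin mulrC ler_wpM2r.
- apply: le_trans (approx ((f a + f b) / 2) (V / 2) _) _.
    by move=> x /dev /midpoint_deviation_le.
  have ba0 : 0 <= b - a by rewrite subr_ge0 ltW.
  rewrite lee_fin powRM ?invr_ge0// mulrA.
  apply: le_trans (_ : V / 2 * (H * (b - a) `^ p) <= _).
    by rewrite ler_wpM2l// divr_ge0.
  by rewrite mulrC mulrA [leRHS]mulrAC ler_wpM2l ?half_le_half_powR // (mulr_ge0 HP0 V0).
Qed.
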